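(* Let $R$ be a discrete valuation ring with field of fractions $K$ and uniformizer $\pi$, $V$ a finite-dimensional $K$-vector space, and $L,M$ lattices of $V$. Then $\pi\cdot m_+(L,M)\subset m_-(L,M)$.
   Context: A lattice of $V$ is a free $R$-submodule $L$ with $K\otimes_R L\to V$ an isomorphism. $m_-(L,M)=\sum_{n\in\mathbb Z}(\pi^nL\cap\pi^{-n}M)$ (the $R$-submodule generated by these) and $m_+(L,M)=\bigcap_{n\in\mathbb Z}(\pi^nL+\pi^{-n}M)$. *)

From HB Require Import structures.
From mathcomp Require Import all_boot all_order all_algebra.
Set Implicit Arguments. Unset Strict Implicit. Unset Printing Implicit Defensive.
Import Order.TTheory GRing.Theory Num.Theory.
Local Open Scope ring_scope.

(* A discrete valuation on the field K: a surjective group homomorphism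
   K^* -> Z satisfying the ultrametric inequality (the value at 0 is
   irrelevant; 0 is treated as having valuation +oo). *)
Definition is_discrete_valuation (K : fieldType) (v : K -> int) : Prop :=
  [/\ (forall x y : K, x != 0 -> y != 0 -> v (x * y) = v x + v y),
      (forall x y : K, x != 0 -> y != 0 -> x + y != 0 ->
          Order.min (v x) (v y) <= v (x + y)) &
      (forall n : int, exists2 x : K, x != 0 & v x = n)].

(* The valuation ring R = {x in K | v x >= 0} u {0}: a DVR whose field of
   fractions is K. *)
Definition valring (K : fieldType) (v : K -> int) : pred K :=
  fun x => (x == 0) || (0 <= v x).

Definition uniformizer (K : fieldType) (v : K -> int) (pi : K) : Prop :=
  pi != 0 /\ v pi = 1.

(* L is a lattice: a free R-submodule of V with K (x)_R L -> V an
   isomorphism, i.e. L is the R-span of some K-basis of V. *)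
Definition is_lattice (K : fieldType) (V : vectType K) (v : K -> int)
    (L : V -> Prop) : Prop :=
  exists b : (\dim (fullv : {vspace V})).-tuple V,
    basis_of fullv b /\
    (forall x : V, L x <->
       exists c : 'I_(\dim (fullv : {vspace V})) -> K,
         (forall i, c i \in valring v) /\ x = \sum_i c i *: b`_i).

Definition scale_set (K : fieldType) (V : lmodType K) (a : K) (L : V -> Prop)
  : V -> Prop := fun x => exists2 y, L y & x = a *: y.

Definition sum_set (K : fieldType) (V : lmodType K) (A B : V -> Prop)
  : V -> Prop := fun x => exists y z, [/\ A y, B z & x = y + z].

Definition is_Rsubmodule (K : fieldType) (V : lmodType K) (v : K -> int)
    (P : V -> Prop) : Prop :=
  [/\ P 0, (forall x y, P x -> P y -> P (x + y)) &
      (forall a x, a \in valring v -> P x -> P (a *: x))].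

Definition Rspan (K : fieldType) (V : lmodType K) (v : K -> int)
    (S : V -> Prop) : V -> Prop :=
  fun x => forall P : V -> Prop, is_Rsubmodule v P ->
    (forall y, S y -> P y) -> P x.

Definition m_minus (K : fieldType) (V : lmodType K) (v : K -> int) (pi : K)
    (L M : V -> Prop) : V -> Prop :=
  Rspan v (fun x => exists n : int,
                      scale_set (pi ^ n) L x /\ scale_set (pi ^ (- n)) M x).

Definition m_plus (K : fieldType) (V : lmodType K) (pi : K)
    (L M : V -> Prop) : V -> Prop :=
  fun x => forall n : int,
    sum_set (scale_set (pi ^ n) L) (scale_set (pi ^ (- n)) M) x.

(* If [y] lies in [pi^a L] and [pi^b M] with [a + b >= -1], then [pi y] is
   already one of the generators of [m_-(L,M)]: it lies in [pi^(a+1) L] and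
   in [pi^(-(a+1)) M].  Otherwise write [y = w + z] with [w] in [pi^(a+1) L]
   and [z] in [pi^(-(a+1)) M], as [y] is in [m_+(L,M)].  Then [z = y - w]
   lies in [pi^a L], so [pi z] is a generator, while [w = y - z] is again in
   [m_+(L,M)], now in [pi^(a+1) L] and [pi^b M]: the defect [a + b] went up
   by one.  Every vector lies in some [pi^(-n) L] and [pi^(-n) M] because
   lattices span [V], so finitely many such steps reach [pi x]. *)

From HB Require Import structures.
From mathcomp Require Import all_boot all_order all_algebra.
From mathcomp Require Import zify.
Import Order.TTheory GRing.Theory Num.Theory.
Local Open Scope ring_scope.
Set Implicit Arguments.
Unset Strict Implicit.

Lemma valringE (K : fieldType) (v : K -> int) x :
  (x \in valring v) = (x == 0) || (0 <= v x).
Proof. by []. Qed.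

Section DiscreteValuation.

Variables (K : fieldType) (v : K -> int).
Hypothesis hv : is_discrete_valuation v.

Lemma dval1 : v 1 = 0.
Proof.
case: hv => vM _ _; have := vM 1 1 (oner_neq0 _) (oner_neq0 _).
rewrite mulr1; lia.
Qed.

Lemma valringN1 : -1 \in valring v.
Proof.
case: hv => vM _ _; have := vM (-1) (-1).
rewrite oppr_eq0 oner_eq0 mulrNN mulr1 dval1 => /(_ isT isT) vN1.
apply/orP; right; lia.
Qed.

Lemma valringD x y : x \in valring v -> y \in valring v -> x + y \in valring v.
Proof.
case: hv => _ vD _.
have [->|x0] := eqVneq x 0; first by rewrite add0r.
have [->|y0] := eqVneq y 0; first by rewrite addr0.
have [xy0|xy0] := eqVneq (x + y) 0; first by rewrite xy0 !valringE eqxx.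
rewrite !valringE (negbTE x0) (negbTE y0) (negbTE xy0) /= => vx vy.
by apply: le_trans (vD x y x0 y0 xy0); rewrite le_min vx vy.
Qed.

Lemma valringM x y : x \in valring v -> y \in valring v -> x * y \in valring v.
Proof.
case: hv => vM _ _.
have [->|x0] := eqVneq x 0; first by rewrite mul0r.
have [->|y0] := eqVneq y 0; first by rewrite mulr0.
rewrite !valringE mulf_eq0 (negbTE x0) (negbTE y0) /= vM //; lia.
Qed.

Variable pi : K.
Hypothesis hpi : uniformizer v pi.

Lemma dval_expr (n : nat) : v (pi ^+ n) = n.
Proof.
case: hpi => pi0 vpi; case: hv => vM _ _.
elim: n => [|n IHn]; first by rewrite expr0 dval1.
rewrite exprS vM ?expf_neq0 // vpi IHn; lia.
Qed.

Lemma valring_exprz (d : int) : 0 <= d -> pi ^ d \in valring v.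
Proof. by case: d => // n _; apply/orP; right; rewrite dval_expr. Qed.

End DiscreteValuation.

Section RSubmodules.

Variables (K : fieldType) (v : K -> int) (V : lmodType K).
Implicit Types (P Q : V -> Prop) (a b : K) (x y : V).

Lemma Rsubmodule0 P : is_Rsubmodule v P -> P 0.
Proof. by case. Qed.

Lemma RsubmoduleD P x y : is_Rsubmodule v P -> P x -> P y -> P (x + y).
Proof. by case=> _ PD _; apply: PD. Qed.

Lemma RsubmoduleB P x y : -1 \in valring v ->
  is_Rsubmodule v P -> P x -> P y -> P (x - y).
Proof.
move=> N1 [_ PD PZ] Px Py; apply: PD => //.
by rewrite -scaleN1r; apply: PZ.
Qed.

Lemma is_Rsubmodule_scale_set a P :
  is_Rsubmodule v P -> is_Rsubmodule v (scale_set a P).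
Proof.
case=> P0 PD PZ; split.
- by exists 0; rewrite ?scaler0.
- move=> _ _ [x Px ->] [y Py ->].
  by exists (x + y); [apply: PD | rewrite scalerDr].
- move=> c _ Rc [x Px ->]; exists (c *: x); first exact: PZ.
  by rewrite !scalerA mulrC.
Qed.

Lemma is_Rsubmodule_sum_set P Q :
  is_Rsubmodule v P -> is_Rsubmodule v Q -> is_Rsubmodule v (sum_set P Q).
Proof.
case=> P0 PD PZ [Q0 QD QZ]; split.
- by exists 0, 0; rewrite addr0.
- move=> _ _ [x [y [Px Qy ->]]] [x' [y' [Px' Qy' ->]]].
  exists (x + x'), (y + y').
  by split; [apply: PD | apply: QD | rewrite addrACA].
- move=> c _ Rc [x [y [Px Qy ->]]].
  exists (c *: x), (c *: y).
  by split; [apply: PZ | apply: QZ | rewrite scalerDr].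
Qed.

Lemma is_Rsubmodule_Rspan P : is_Rsubmodule v (Rspan v P).
Proof.
split=> [Q [Q0 _ _] //|x y Px Py Q hQ PQ|c x Rc Px Q hQ PQ].
- exact: RsubmoduleD (Px Q hQ PQ) (Py Q hQ PQ).
- by case: (hQ) => _ _ QZ; apply: QZ (Px Q hQ PQ).
Qed.

Lemma Rspan_sub P x : P x -> Rspan v P x.
Proof. by move=> Px Q _; apply. Qed.

Lemma scale_setZ a b P x : scale_set b P x -> scale_set (a * b) P (a *: x).
Proof. by case=> y Py ->; exists y; rewrite ?scalerA. Qed.

End RSubmodules.

Section Lattices.

Variables (K : fieldType) (V : vectType K) (v : K -> int).
Hypothesis hv : is_discrete_valuation v.
Variables (pi : K) (L : V -> Prop).
Hypothesis hL : is_lattice v L.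

Lemma lattice_Rsubmodule : is_Rsubmodule v L.
Proof.
case: hL => b [_ Lb]; split.
- apply/Lb; exists (fun=> 0); split=> [i|]; first by rewrite valringE eqxx.
  by rewrite big1 // => i _; rewrite scale0r.
- move=> _ _ /Lb[c [Rc ->]] /Lb[d [Rd ->]]; apply/Lb.
  exists (fun i => c i + d i); split=> [i|]; first exact: valringD.
  by rewrite -big_split; apply: eq_bigr => i _; rewrite scalerDl.
- move=> a _ Ra /Lb[c [Rc ->]]; apply/Lb.
  exists (fun i => a * c i); split=> [i|]; first exact: valringM.
  by rewrite scaler_sumr; apply: eq_bigr => i _; rewrite scalerA.
Qed.

Hypothesis hpi : uniformizer v pi.

(* The exponent [sum_i |v (c_i)|] clears the denominators of all the
   coordinates [c_i] of [x] in the basis defining [L]. *)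
Lemma lattice_absorbing x : exists n : nat, L (pi ^+ n *: x).
Proof.
have [pi0 _] := hpi; case: hv => vM _ _.
case: hL => b [bB Lb]; pose c i := coord b i x.
pose n := (\sum_i `|v (c i)|)%N; exists n; apply/Lb.
exists (fun i => pi ^+ n * c i); split=> [i|].
- have [->|ci0] := eqVneq (c i) 0; first by rewrite mulr0 valringE eqxx.
  apply/orP; right; rewrite vM ?expf_neq0 // dval_expr //.
  have : (`|v (c i)| <= n)%N by rewrite /n (bigD1 i) //= leq_addr.
  lia.
- rewrite {1}(coord_basis bB (memvf x)) scaler_sumr.
  by apply: eq_bigr => i _; rewrite scalerA.
Qed.

Lemma lattice_scale_set x : exists n : nat, scale_set (pi ^ (- n%:Z)) L x.
Proof.
have [pi0 _] := hpi; have [n Ln] := lattice_absorbing x.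
exists n, (pi ^+ n *: x) => //.
by rewrite scalerA -exprnN mulVf ?scale1r ?expf_neq0.
Qed.

End Lattices.

Section MPlusMinus.

Variables (K : fieldType) (v : K -> int) (pi : K).
Hypotheses (hv : is_discrete_valuation v) (hpi : uniformizer v pi).
Variables (V : lmodType K) (L M : V -> Prop).
Hypotheses (hL : is_Rsubmodule v L) (hM : is_Rsubmodule v M).

Let pi0 : pi != 0. Proof. by case: hpi. Qed.

Lemma scale_set_exprz_le (P : V -> Prop) (i j : int) (x : V) :
  is_Rsubmodule v P -> i <= j ->
  scale_set (pi ^ j) P x -> scale_set (pi ^ i) P x.
Proof.
case=> _ _ PZ ij [y Py ->]; exists (pi ^ (j - i) *: y).
  by apply: PZ Py; apply: valring_exprz; rewrite ?subr_ge0.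
by rewrite scalerA -expfzDr // addrC subrK.
Qed.

Lemma scale_set_scale_pi (P : V -> Prop) (i : int) (x : V) :
  scale_set (pi ^ i) P x -> scale_set (pi ^ (i + 1)) P (pi *: x).
Proof. by move/(scale_setZ pi); rewrite expfzDr // expr1z mulrC. Qed.

Lemma is_Rsubmodule_m_plus : is_Rsubmodule v (m_plus pi L M).
Proof.
have hn n := is_Rsubmodule_sum_set (is_Rsubmodule_scale_set (pi ^ n) hL)
                                   (is_Rsubmodule_scale_set (pi ^ (- n)) hM).
split=> [n|x y x_ y_ n|c x Rc x_ n].
- exact: Rsubmodule0.
- exact: RsubmoduleD.
- by case: (hn n) => _ _ nZ; apply: nZ.
Qed.

Lemma m_minus_scale_gen y (a b : int) :
  scale_set (pi ^ a) L y -> scale_set (pi ^ b) M y -> -1 <= a + b ->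
  m_minus v pi L M (pi *: y).
Proof.
move=> La Mb ab; apply: Rspan_sub; exists (a + 1); split.
  exact: scale_set_scale_pi.
by apply: scale_set_exprz_le hM _ (scale_set_scale_pi Mb); lia.
Qed.

Lemma m_plus_scale_sets z (a b : int) :
  scale_set (pi ^ a) L z -> scale_set (pi ^ b) M z -> -1 <= a + b ->
  m_plus pi L M z.
Proof.
move=> La Mb ab n; have [na|an] := lerP n a.
- exists z, 0; split; rewrite ?addr0 //.
    exact: scale_set_exprz_le hL na La.
  exact: Rsubmodule0 (is_Rsubmodule_scale_set _ hM).
- exists 0, z; split; rewrite ?add0r //.
    exact: Rsubmodule0 (is_Rsubmodule_scale_set _ hL).
  by apply: scale_set_exprz_le hM _ Mb; lia.
Qed.

Lemma m_plus_split y (a b : int) :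
  m_plus pi L M y -> scale_set (pi ^ a) L y -> scale_set (pi ^ b) M y ->
  a + b < -1 ->
  exists w z, [/\ y = w + z, m_plus pi L M w,
    scale_set (pi ^ (a + 1)) L w, scale_set (pi ^ b) M w &
    m_minus v pi L M (pi *: z)].
Proof.
move=> y_ La Mb ab; have N1 := valringN1 hv.
have [w [z [Lw Mz yE]]] := y_ (a + 1); exists w, z.
have La_z : scale_set (pi ^ a) L z.
  rewrite [z](_ : _ = y - w); last by rewrite yE addrAC subrr add0r.
  apply: RsubmoduleB (is_Rsubmodule_scale_set _ hL) La _ => //.
  by apply: scale_set_exprz_le hL _ Lw; lia.
have wE : w = y - z by rewrite yE addrK.
split=> //.
- rewrite wE; apply: RsubmoduleB is_Rsubmodule_m_plus y_ _ => //.
  by apply: m_plus_scale_sets La_z Mz _; lia.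
- rewrite wE; apply: RsubmoduleB (is_Rsubmodule_scale_set _ hM) Mb _ => //.
  by apply: scale_set_exprz_le hM _ Mz; lia.
- by apply: m_minus_scale_gen La_z Mz _; lia.
Qed.

Lemma m_minus_scale_m_plus y (a b : int) :
  m_plus pi L M y -> scale_set (pi ^ a) L y -> scale_set (pi ^ b) M y ->
  m_minus v pi L M (pi *: y).
Proof.
suff defect k : forall y a b, m_plus pi L M y -> scale_set (pi ^ a) L y ->
    scale_set (pi ^ b) M y -> -1 - k%:Z <= a + b -> m_minus v pi L M (pi *: y).
  by move=> y_ La Mb; apply: (defect (absz (a + b)) y a b y_ La Mb); lia.
elim: k => [|k IHk] {}y {}a {}b y_ La Mb ab.
  by apply: m_minus_scale_gen La Mb _; lia.
have [ab1|ab1] := lerP (-1) (a + b); first exact: m_minus_scale_gen La Mb ab1.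
have [w [z [-> w_ Lw Mw z_]]] := m_plus_split y_ La Mb ab1.
rewrite scalerDr; apply: RsubmoduleD z_ => //; first exact: is_Rsubmodule_Rspan.
by apply: IHk w_ Lw Mw _; lia.
Qed.

End MPlusMinus.

Theorem theorem1p2p4 (K : fieldType) (V : vectType K) (v : K -> int)
    (hv : is_discrete_valuation v) (pi : K) (hpi : uniformizer v pi)
    (L M : V -> Prop) (hL : is_lattice v L) (hM : is_lattice v M) :
  forall x : V, m_plus pi L M x -> m_minus v pi L M (pi *: x).
Proof.
move=> x x_.
have [m Lx] := lattice_scale_set hv hL hpi x.
have [n Mx] := lattice_scale_set hv hM hpi x.
exact: (m_minus_scale_m_plus hv hpi
  (lattice_Rsubmodule hv hL) (lattice_Rsubmodule hv hM) x_ Lx Mx).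
Qed.
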